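(* Let $\ell\ge1$. For each integer $\kappa\ge1$ and $u>1$, \[ \frac{d}{du}\widetilde{K}_{\ell}(u,\kappa)=\kappa\, \widetilde{K}_{\ell}(u,\kappa-1)+\sum_{m=0}^{\ell}\sum_{r=0}^{\ell-m}\frac{(-1)^{r}\Gamma(\kappa+1)}{m!\,(\ell-m-r)!}E_{\kappa,m}C_{r,0}\frac{d}{du}\left(\log^{\ell-m-r}u\right). \]
   Context: For integers $\ell\ge1$, $\kappa\ge0$ and $u>1$, define \[ \widetilde{K}_{\ell}(u,\kappa):=\sum_{m=0}^{\ell}\sum_{n=m}^{\kappa}\sum_{r=0}^{\ell-m}\frac{(-1)^{r}\Gamma(\kappa+1)}{m!\,(\ell-m-r)!}E_{n,m}C_{r,\kappa-n}u^{\kappa-n}\log^{\ell-m-r}u, \] where the sum over $n$ is empty if $m>\kappa$; the constants $C_{r,\kappa}$ ($r,\kappa\ge0$) are defined by $\sum_{r\ge0}C_{r,\kappa}z^r=e^{\gamma z}/\Gamma(\kappa+1-z)$ with $\gamma$ Euler's constant; and the constants $E_{n,m}$ ($n,m\ge0$) are defined by $\sum_{n\ge0}E_{n,m}z^n=\left(\int_0^z\frac{1-e^{-t}}{t}\,dt\right)^m$. *)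

From Stdlib Require Import Reals Arith Factorial.
From Coquelicot Require Import Coquelicot.
Open Scope R_scope.

Definition euler_gamma : R :=
  real (Lim_seq (fun N => sum_n_m (fun k => / INR k) 1 N - ln (INR N))).

Definition Gamma (x : R) : R :=
  RInt_gen (fun t => Rpower t (x - 1) * exp (- t)) (at_right 0) (Rbar_locally p_infty).

Definition taylor_coeff (f : R -> R) (n : nat) : R := Derive_n f n 0 / INR (fact n).

Definition Ccoef (r kappa : nat) : R :=
  taylor_coeff (fun z => exp (euler_gamma * z) / Gamma (INR kappa + 1 - z)) r.

Definition Ein (z : R) : R := RInt (fun t => (1 - exp (- t)) / t) 0 z.

Definition Ecoef (n m : nat) : R := taylor_coeff (fun z => Ein z ^ m) n.

(* \widetilde K_ell(u, kappa); sum_n_m f a b is empty (= 0) when b < a. *)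
Definition Ktilde (ell : nat) (u : R) (kappa : nat) : R :=
  sum_n_m (fun m =>
    sum_n_m (fun n =>
      sum_n_m (fun r =>
        (-1) ^ r * Gamma (INR kappa + 1) / (INR (fact m) * INR (fact (ell - m - r)))
        * Ecoef n m * Ccoef r (kappa - n) * u ^ (kappa - n) * ln u ^ (ell - m - r))
      0 (ell - m))
    m kappa)
  0 ell.

From Stdlib Require Import Reals Arith Factorial Lra Lia FunctionalExtensionality.
From Coquelicot Require Import Coquelicot.
Open Scope R_scope.

(* [Ktilde ell u kappa] is a polynomial in [u] and [ln u], differentiated termwise. For
   [k = kappa - n >= 1], the functional equation [Gamma (k + 1 - z) = (k - z) Gamma (k - z)] in
   the generating function of the [C_{r,k}] gives [k C_{r,k} = C_{r,k-1} + C_{r-1,k}]. With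
   [Gamma (kappa + 1) = kappa Gamma kappa], the [C_{r,k-1}] parts of the derivatives of the
   powers of [u] reassemble into [kappa Ktilde ell u (kappa - 1)], while the [C_{r-1,k}] parts
   cancel the derivatives of the powers of [ln u] once [r] is shifted by one. Only the terms with
   [n = kappa] survive; for [m > kappa] they vanish since [Ein 0 = 0] forces [E_{kappa,m} = 0].
   Both coefficient identities need smoothness: [Gamma] is differentiated under the integral
   sign, with majorant [t ^ a |ln t| ^ m e ^ -t], and the integrand of [Ein] is an entire power
   series. *)

(* Specializations to [R]: the generic Coquelicot statements do not unify with goals over [R]. *)
Lemma ex_RInt_continuous_R (f : R -> R) a b :
  (forall z, Rmin a b <= z <= Rmax a b -> continuous f z) -> ex_RInt f a b.
Proof. exact (ex_RInt_continuous (V := R_CompleteNormedModule) f a b). Qed.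

Lemma RInt_correct_R (f : R -> R) a b : ex_RInt f a b -> is_RInt f a b (RInt f a b).
Proof. exact (RInt_correct (V := R_CompleteNormedModule) f a b). Qed.

Lemma RInt_Chasles_R (f : R -> R) a b c :
  ex_RInt f a b -> ex_RInt f b c -> RInt f a b + RInt f b c = RInt f a c.
Proof. exact (RInt_Chasles (V := R_CompleteNormedModule) f a b c). Qed.

Lemma continuous_mult_R (f g : R -> R) x :
  continuous f x -> continuous g x -> continuous (fun y => f y * g y) x.
Proof. exact (continuous_mult (U := R_UniformSpace) (K := R_AbsRing) f g x). Qed.

Lemma ex_derive_continuous_R (f : R -> R) x : ex_derive f x -> continuous f x.
Proof. exact (ex_derive_continuous (K := R_AbsRing) (V := R_NormedModule) f x). Qed.

Lemma continuous_pow_R (f : R -> R) (m : nat) x :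
  continuous f x -> continuous (fun y => f y ^ m) x.
Proof.
  intros Hf. induction m as [|m IHm].
  - apply continuous_const.
  - apply continuous_mult_R; assumption.
Qed.

(** * Improper integrals *)

Lemma is_RInt_gen_iff_filterlim {Fa Fb} {FFa : ProperFilter Fa} {FFb : ProperFilter Fb}
  (D : R -> Prop) (f : R -> R) (l : R) :
  Fa D -> Fb D -> (forall a b, D a -> D b -> ex_RInt f a b) ->
  (is_RInt_gen f Fa Fb l <->
   filterlim (fun ab => RInt f (fst ab) (snd ab)) (filter_prod Fa Fb) (locally l)).
Proof.
  intros Ha Hb Hint.
  assert (HD : filter_prod Fa Fb (fun ab => D (fst ab) /\ D (snd ab)))
    by (exists D D; auto).
  split; intros H P HP; specialize (H P HP); unfold filtermapi, filtermap in *;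
    generalize (filter_and _ _ H HD); apply filter_imp;
    intros [a b] [Hab [Da Db]]; simpl in *.
  - destruct Hab as [y [Hy HPy]].
    rewrite (is_RInt_unique _ _ _ _ Hy). exact HPy.
  - exists (RInt f a b). split; [exact (RInt_correct_R f a b (Hint a b Da Db)) | exact Hab].
Qed.

Lemma abs_RInt_le_abs_RInt (f g : R -> R) a b :
  ex_RInt f a b -> ex_RInt g a b ->
  (forall x, Rmin a b <= x <= Rmax a b -> Rabs (f x) <= g x) ->
  Rabs (RInt f a b) <= Rabs (RInt g a b).
Proof.
  intros Hf Hg Hfg. destruct (Rle_or_lt a b) as [Hab|Hab].
  - rewrite Rmin_left, Rmax_right in Hfg by lra.
    eapply Rle_trans; [|apply Rle_abs].
    apply (norm_RInt_le f g a b); auto; apply RInt_correct_R; assumption.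
  - rewrite Rmin_right, Rmax_left in Hfg by lra.
    rewrite <- (opp_RInt_swap f), <- (opp_RInt_swap g) by (apply ex_RInt_swap; assumption).
    unfold opp; simpl. rewrite !Rabs_Ropp.
    eapply Rle_trans; [|apply Rle_abs].
    apply (norm_RInt_le f g b a); try lra; auto;
      apply RInt_correct_R, ex_RInt_swap; assumption.
Qed.

Section Comparison.

Context {Fa Fb : (R -> Prop) -> Prop} {FFa : ProperFilter Fa} {FFb : ProperFilter Fb}.
Variables (D : R -> Prop) (f g : R -> R).
Hypothesis D_interval : forall a b x, D a -> D b -> Rmin a b <= x <= Rmax a b -> D x.
Hypothesis f_continuous : forall x, D x -> continuous f x.
Hypothesis g_continuous : forall x, D x -> continuous g x.
Hypothesis abs_f_le_g : forall x, D x -> Rabs (f x) <= g x.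

Lemma ex_RInt_on_interval (h : R -> R) a b :
  (forall x, D x -> continuous h x) -> D a -> D b -> ex_RInt h a b.
Proof.
  intros Hh Da Db. apply ex_RInt_continuous_R. intros z Hz.
  apply Hh, (D_interval a b); assumption.
Qed.

Lemma RInt_increment_le a b a' b' : D a -> D b -> D a' -> D b' ->
  Rabs (RInt f a' b' - RInt f a b)
  <= Rabs (RInt g a' b - RInt g a b) + Rabs (RInt g a b' - RInt g a b).
Proof.
  intros Da Db Da' Db'.
  assert (Hf : forall x y, D x -> D y -> ex_RInt f x y) by (intros; apply ex_RInt_on_interval; auto).
  assert (Hg : forall x y, D x -> D y -> ex_RInt g x y) by (intros; apply ex_RInt_on_interval; auto).
  assert (Ef : RInt f a' b' - RInt f a b = RInt f a' a + RInt f b b').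
  { rewrite <- (RInt_Chasles_R f a' a b'), <- (RInt_Chasles_R f a b b') by auto. lra. }
  assert (Ea : RInt g a' b - RInt g a b = RInt g a' a).
  { rewrite <- (RInt_Chasles_R g a' a b) by auto. lra. }
  assert (Eb : RInt g a b' - RInt g a b = RInt g b b').
  { rewrite <- (RInt_Chasles_R g a b b') by auto. lra. }
  rewrite Ef, Ea, Eb. eapply Rle_trans; [apply Rabs_triang|].
  apply Rplus_le_compat; apply abs_RInt_le_abs_RInt; auto.
  - intros x Hx. apply abs_f_le_g, (D_interval a' a x); auto.
  - intros x Hx. apply abs_f_le_g, (D_interval b b' x); auto.
Qed.

Lemma ex_RInt_gen_le lg :
  Fa D -> Fb D -> is_RInt_gen g Fa Fb lg -> ex_RInt_gen f Fa Fb.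
Proof.
  intros Ha Hb Hlg.
  apply (is_RInt_gen_iff_filterlim D g lg Ha Hb) in Hlg;
    [|intros; apply ex_RInt_on_interval; auto].
  assert (Hcauchy : exists l, filterlim (fun ab => RInt f (fst ab) (snd ab))
                                (filter_prod Fa Fb) (locally l)).
  { apply filterlim_locally_cauchy. intros [eps Heps].
    assert (He : 0 < eps / 4) by lra.
    destruct (Hlg _ (locally_ball lg (mkposreal _ He))) as [Qa Qb HQa HQb HQ].
    exists (fun ab => (Qa (fst ab) /\ D (fst ab)) /\ (Qb (snd ab) /\ D (snd ab))). split.
    - exists (fun a => Qa a /\ D a) (fun b => Qb b /\ D b); try apply filter_and; auto.
    - intros [a b] [a' b'] [[Qa1 Da] [Qb1 Db]] [[Qa2 Da'] [Qb2 Db']]; simpl in *.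
      assert (E1 := HQ a b Qa1 Qb1). assert (E2 := HQ a' b Qa2 Qb1).
      assert (E3 := HQ a b' Qa1 Qb2).
      change (Rabs (RInt f a' b' - RInt f a b) < eps).
      change (Rabs (RInt g a b - lg) < eps / 4) in E1.
      change (Rabs (RInt g a' b - lg) < eps / 4) in E2.
      change (Rabs (RInt g a b' - lg) < eps / 4) in E3.
      eapply Rle_lt_trans; [apply RInt_increment_le; assumption|].
      assert (T : forall x y, Rabs (x - lg) < eps / 4 -> Rabs (y - lg) < eps / 4 ->
                              Rabs (x - y) < eps / 2).
      { intros x y Hx Hy. replace (x - y) with ((x - lg) - (y - lg)) by ring.
        eapply Rle_lt_trans; [apply Rabs_triang|]. rewrite Rabs_Ropp. lra. }
      assert (T2 := T _ _ E2 E1). assert (T3 := T _ _ E3 E1). lra. }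
  destruct Hcauchy as [l Hl]. exists l.
  apply (is_RInt_gen_iff_filterlim D f l Ha Hb); auto.
  intros; apply ex_RInt_on_interval; auto.
Qed.

End Comparison.

Lemma is_RInt_gen_antiderivative {Fa Fb} {FFa : Filter Fa} {FFb : Filter Fb}
  (D : R -> Prop) (F g : R -> R) la lb :
  open D ->
  filter_prod Fa Fb (fun ab => forall x,
    Rmin (fst ab) (snd ab) <= x <= Rmax (fst ab) (snd ab) -> D x) ->
  (forall x, D x -> is_derive F x (g x)) -> (forall x, D x -> continuous g x) ->
  filterlim F Fa (locally la) -> filterlim F Fb (locally lb) ->
  is_RInt_gen g Fa Fb (lb - la).
Proof.
  intros HD Hreg Hder Hcont Hla Hlb.
  apply is_RInt_gen_ext with (Derive F).
  { generalize Hreg. apply filter_imp. intros [a b] H x Hx. simpl in *.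
    apply is_derive_unique, Hder, H. lra. }
  apply is_RInt_gen_Derive; auto; generalize Hreg; apply filter_imp; intros [a b] H x Hx.
  - eexists. apply Hder, H, Hx.
  - apply continuous_ext_loc with g.
    + apply (locally_open D); auto. intros y Hy. symmetry. apply is_derive_unique, Hder, Hy.
    + apply Hcont, H, Hx.
Qed.

Lemma filterlim_at_point_R (f : R -> R) a : filterlim f (at_point a) (locally (f a)).
Proof. intros P HP. exact (locally_singleton _ _ HP). Qed.

Lemma filterlim_at_right_continuous (f : R -> R) a :
  continuous f a -> filterlim f (at_right a) (locally (f a)).
Proof.
  intros H P HP. destruct (H P HP) as [eps He]. exists eps. intros y Hy _. apply He, Hy.
Qed.

Lemma filterlim_scal_0 {T} {F : (T -> Prop) -> Prop} {FF : Filter F} (f : T -> R) K :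
  filterlim f F (locally 0) -> filterlim (fun t => K * f t) F (locally 0).
Proof.
  intros H. replace 0 with (K * 0) by ring.
  apply (filterlim_comp _ _ _ f (fun y => K * y) F (locally 0)); auto.
  apply (ex_derive_continuous_R (fun y => K * y) 0). auto_derive. auto.
Qed.

Lemma filterlim_abs_le_0 {T} {F : (T -> Prop) -> Prop} {FF : Filter F} (f g : T -> R) :
  filterlim g F (locally 0) -> F (fun t => Rabs (f t) <= g t) -> filterlim f F (locally 0).
Proof.
  intros Hg Hfg. apply filterlim_locally. intros eps.
  apply filterlim_locally with (eps := eps) in Hg.
  generalize (filter_and _ _ Hg Hfg). apply filter_imp. intros t [Ht Hft].
  change (Rabs (g t - 0) < eps) in Ht. change (Rabs (f t - 0) < eps).
  rewrite Rminus_0_r in *. apply Rle_lt_trans with (Rabs (g t)); [|assumption].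
  eapply Rle_trans; [apply Hft | apply Rle_abs].
Qed.

Lemma filterlim_Rpower_at_right_0 p :
  0 < p -> filterlim (fun t => Rpower t p) (at_right 0) (locally 0).
Proof.
  intros Hp. apply filterlim_locally. intros [e He].
  exists (mkposreal (exp (ln e / p)) (exp_pos _)). intros y Hy Hy0.
  change (Rabs (y - 0) < exp (ln e / p)) in Hy. change (Rabs (Rpower y p - 0) < e).
  rewrite Rminus_0_r in *. rewrite Rabs_pos_eq in Hy by lra.
  rewrite Rabs_pos_eq by (left; apply exp_pos).
  unfold Rpower. rewrite <- (exp_ln e) by assumption. apply exp_increasing.
  assert (Hlt : ln y < ln e / p) by (rewrite <- (ln_exp (ln e / p)); apply ln_increasing; auto).
  apply Rmult_lt_compat_l with (r := p) in Hlt; [|assumption].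
  replace (p * (ln e / p)) with (ln e) in Hlt by (field; lra). lra.
Qed.

Lemma filterlim_exp_half_p_infty :
  filterlim (fun t => exp (- t / 2)) (Rbar_locally p_infty) (locally 0).
Proof.
  apply filterlim_locally. intros [e He]. exists (- 2 * ln e). intros x Hx.
  change (Rabs (exp (- x / 2) - 0) < e).
  rewrite Rminus_0_r, Rabs_pos_eq by (left; apply exp_pos).
  rewrite <- (exp_ln e) by assumption. apply exp_increasing. lra.
Qed.

Lemma at_right_0_pos : at_right 0 (fun t => 0 < t).
Proof. exists (mkposreal 1 Rlt_0_1). intros; assumption. Qed.

Lemma p_infty_pos : Rbar_locally p_infty (fun t => 0 < t).
Proof. exists 0. intros; assumption. Qed.

Lemma filter_prod_0_p_infty_pos :
  filter_prod (at_right 0) (Rbar_locally p_infty)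
    (fun ab => forall x, Rmin (fst ab) (snd ab) <= x <= Rmax (fst ab) (snd ab) -> 0 < x).
Proof.
  exists (fun a => 0 < a) (fun b => 0 < b); [apply at_right_0_pos | apply p_infty_pos|].
  intros a b Ha Hb x Hx. simpl in Hx.
  apply Rlt_le_trans with (Rmin a b); [apply Rmin_glb_lt|]; lra.
Qed.

Lemma RInt_gen_correct_0_p_infty (f : R -> R) :
  ex_RInt_gen f (at_right 0) (Rbar_locally p_infty) ->
  is_RInt_gen f (at_right 0) (Rbar_locally p_infty)
    (RInt_gen f (at_right 0) (Rbar_locally p_infty)).
Proof. exact (RInt_gen_correct (V := R_CompleteNormedModule) f). Qed.

Lemma is_RInt_gen_unique_0_p_infty (f : R -> R) l :
  is_RInt_gen f (at_right 0) (Rbar_locally p_infty) l ->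
  RInt_gen f (at_right 0) (Rbar_locally p_infty) = l.
Proof. exact (is_RInt_gen_unique (V := R_CompleteNormedModule) f l). Qed.

(** * The [Gamma] function *)

Lemma exp_le_compat x y : x <= y -> exp x <= exp y.
Proof. intros [H|H]; [left; apply exp_increasing | right; subst]; auto. Qed.

Lemma Rpower_pos t a : 0 < Rpower t a.
Proof. apply exp_pos. Qed.

Lemma ln_le_sub_1 y : 0 < y -> ln y <= y - 1.
Proof. intros Hy. generalize (exp_ineq1_le (ln y)). rewrite exp_ln; lra. Qed.

Lemma Rpower_pow_R t (m : nat) y : Rpower t y ^ m = Rpower t (y * INR m).
Proof.
  induction m as [|m IHm].
  - unfold Rpower. simpl. rewrite Rmult_0_r, Rmult_0_l, exp_0. reflexivity.
  - rewrite S_INR. simpl. rewrite IHm, <- Rpower_plus. f_equal. ring.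
Qed.

Lemma Rpower_le_exponent_le_1 t y z : 0 < t <= 1 -> y <= z -> Rpower t z <= Rpower t y.
Proof.
  intros Ht Hyz. apply exp_le_compat.
  assert (ln t <= 0) by (rewrite <- ln_1; apply ln_le; lra). nra.
Qed.

Lemma Rpower_le_exponent_ge_1 t y z : 1 <= t -> y <= z -> Rpower t y <= Rpower t z.
Proof.
  intros Ht Hyz. apply exp_le_compat.
  assert (0 <= ln t) by (rewrite <- ln_1; apply ln_le; lra). nra.
Qed.

Lemma abs_ln_le_Rpower t e : 0 < t -> 0 < e ->
  Rabs (ln t) <= (Rpower t e + Rpower t (- e)) / e.
Proof.
  intros Ht He.
  assert (H1 := ln_le_sub_1 _ (Rpower_pos t e)). rewrite ln_Rpower in H1.
  assert (H2 := ln_le_sub_1 _ (Rpower_pos t (- e))). rewrite ln_Rpower in H2.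
  assert (P1 := Rpower_pos t e). assert (P2 := Rpower_pos t (- e)).
  apply Rmult_le_reg_r with e; [assumption|].
  unfold Rdiv. rewrite Rmult_assoc, Rinv_l, Rmult_1_r by lra.
  unfold Rabs; destruct (Rcase_abs (ln t)); nra.
Qed.

Lemma Rpower_mul_exp_half_le t q : 0 < t -> 0 < q ->
  Rpower t q * exp (- t / 2) <= Rpower (2 * q) q.
Proof.
  intros Ht Hq.
  assert (H1 : t * exp (- (t / (2 * q))) <= 2 * q).
  { generalize (exp_ineq1_le (t / (2 * q))). intros H.
    assert (Hp := exp_pos (t / (2 * q))). rewrite exp_Ropp.
    apply Rmult_le_reg_r with (exp (t / (2 * q))); [assumption|].
    rewrite Rmult_assoc, Rinv_l by lra.
    assert (t = (t / (2 * q)) * (2 * q)) by (field; lra). nra. }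
  assert (H2 : Rpower (t * exp (- (t / (2 * q)))) q <= Rpower (2 * q) q).
  { apply Rle_Rpower_l; [lra|]. split; [|assumption].
    apply Rmult_lt_0_compat; [assumption | apply exp_pos]. }
  rewrite <- Rpower_mult_distr in H2 by (auto; apply exp_pos).
  unfold Rpower at 2 in H2. rewrite ln_exp in H2.
  replace (q * - (t / (2 * q))) with (- t / 2) in H2 by (field; lra). exact H2.
Qed.

Definition gamma_majorant (a : R) (m : nat) (t : R) : R :=
  Rpower t a * Rabs (ln t) ^ m * exp (- t).

Lemma gamma_majorant_ge_0 a m t : 0 <= gamma_majorant a m t.
Proof.
  unfold gamma_majorant. apply Rmult_le_pos; [apply Rmult_le_pos|].
  - left; apply Rpower_pos.
  - apply pow_le, Rabs_pos.
  - left; apply exp_pos.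
Qed.

(* The logarithmic factor costs an arbitrarily small power of [t] near [0]. *)
Lemma gamma_majorant_near_0 a c m : c < a -> exists K, 0 <= K /\
  forall t, 0 < t <= 1 -> gamma_majorant a m t <= K * Rpower t c.
Proof.
  intros Hca. set (e := (a - c) / (INR m + 1)).
  assert (Hm : 0 < INR m + 1) by (generalize (pos_INR m); lra).
  assert (He : 0 < e) by (unfold e; apply Rdiv_lt_0_compat; lra).
  assert (HK : 0 <= (2 / e) ^ m) by (apply pow_le; unfold Rdiv; apply Rmult_le_pos; [lra|];
                                     left; apply Rinv_0_lt_compat; assumption).
  exists ((2 / e) ^ m). split; [assumption|]. intros t Ht. unfold gamma_majorant.
  assert (Hle : Rpower t e <= Rpower t (- e)) by (apply Rpower_le_exponent_le_1; lra).
  assert (Hln : Rabs (ln t) <= 2 / e * Rpower t (- e)).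
  { eapply Rle_trans; [apply (abs_ln_le_Rpower t e); lra|]. unfold Rdiv.
    replace (2 * / e * Rpower t (- e)) with ((Rpower t (- e) + Rpower t (- e)) * / e) by ring.
    apply Rmult_le_compat_r; [left; apply Rinv_0_lt_compat|]; lra. }
  assert (Hlnm : Rabs (ln t) ^ m <= (2 / e) ^ m * Rpower t (- e * INR m)).
  { rewrite <- Rpower_pow_R, <- Rpow_mult_distr. apply pow_incr. split; [apply Rabs_pos|assumption]. }
  assert (Hexp : exp (- t) <= 1) by (rewrite <- exp_0; apply exp_le_compat; lra).
  assert (Hpow : Rpower t a * Rpower t (- e * INR m) <= Rpower t c).
  { rewrite <- Rpower_plus. apply Rpower_le_exponent_le_1; [assumption|].
    assert (e * (INR m + 1) = a - c) by (unfold e; field; lra).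
    assert (0 < e) by assumption. nra. }
  assert (P1 := Rpower_pos t a). assert (P2 := exp_pos (- t)).
  assert (P3 : 0 <= Rabs (ln t) ^ m) by (apply pow_le, Rabs_pos).
  apply Rle_trans with (Rpower t a * ((2 / e) ^ m * Rpower t (- e * INR m)) * 1).
  - apply Rmult_le_compat; try lra.
    + apply Rmult_le_pos; lra.
    + apply Rmult_le_compat_l; lra.
  - replace (Rpower t a * ((2 / e) ^ m * Rpower t (- e * INR m)) * 1)
      with ((2 / e) ^ m * (Rpower t a * Rpower t (- e * INR m))) by ring.
    apply Rmult_le_compat_l; assumption.
Qed.

Lemma gamma_majorant_near_p_infty a m : exists K, 0 <= K /\
  forall t, 1 <= t -> gamma_majorant a m t <= K * exp (- t / 2).
Proof.
  set (q := Rmax (a + INR m) 1).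
  assert (Hq : 0 < q) by (unfold q; generalize (Rmax_r (a + INR m) 1); lra).
  exists (Rpower (2 * q) q). split; [left; apply Rpower_pos|].
  intros t Ht. unfold gamma_majorant.
  assert (Hl : 0 <= ln t) by (rewrite <- ln_1; apply ln_le; lra).
  assert (Hlt : ln t <= t) by (generalize (ln_le_sub_1 t ltac:(lra)); lra).
  assert (Hlnm : Rabs (ln t) ^ m <= Rpower t (1 * INR m)).
  { rewrite <- Rpower_pow_R. unfold Rpower at 1. rewrite Rmult_1_l, exp_ln by lra.
    apply pow_incr. rewrite Rabs_pos_eq; lra. }
  assert (Hpow : Rpower t a * Rpower t (1 * INR m) <= Rpower t q).
  { rewrite <- Rpower_plus. apply Rpower_le_exponent_ge_1; [assumption|].
    unfold q. generalize (Rmax_l (a + INR m) 1). lra. }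
  assert (T := Rpower_mul_exp_half_le t q ltac:(lra) Hq).
  assert (Ee : exp (- t) = exp (- t / 2) * exp (- t / 2)) by (rewrite <- exp_plus; f_equal; field).
  assert (P1 := Rpower_pos t a). assert (P2 := exp_pos (- t / 2)).
  assert (P3 : 0 <= Rabs (ln t) ^ m) by (apply pow_le, Rabs_pos).
  assert (Hx : Rpower t a * Rabs (ln t) ^ m <= Rpower t q).
  { eapply Rle_trans; [apply Rmult_le_compat_l; [lra|exact Hlnm]|exact Hpow]. }
  rewrite Ee, <- Rmult_assoc.
  apply Rle_trans with (Rpower t q * exp (- t / 2) * exp (- t / 2)).
  - apply Rmult_le_compat_r; [lra|apply Rmult_le_compat_r; lra].
  - apply Rmult_le_compat_r; lra.
Qed.

Lemma is_derive_Rpower x y : 0 < x -> is_derive (fun t => Rpower t y) x (y * Rpower x (y - 1)).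
Proof. intros Hx. apply is_derive_Reals, derivable_pt_lim_power, Hx. Qed.

Lemma continuous_Rpower x y : 0 < x -> continuous (fun t => Rpower t y) x.
Proof. intros Hx. apply ex_derive_continuous_R. eexists. apply is_derive_Rpower, Hx. Qed.

Lemma continuous_exp_opp x : continuous (fun t => exp (- t)) x.
Proof. apply ex_derive_continuous_R. auto_derive. trivial. Qed.

Lemma continuous_gamma_majorant a m x : 0 < x -> continuous (gamma_majorant a m) x.
Proof.
  intros Hx. unfold gamma_majorant.
  apply continuous_mult_R; [apply continuous_mult_R|].
  - apply continuous_Rpower, Hx.
  - apply continuous_pow_R, continuous_comp; [apply continuous_ln, Hx | apply continuous_Rabs].
  - apply continuous_exp_opp.
Qed.

Lemma ex_RInt_gen_gamma_majorant_0_1 a m :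
  -1 < a -> ex_RInt_gen (gamma_majorant a m) (at_right 0) (at_point 1).
Proof.
  intros Ha. set (c := (a - 1) / 2).
  assert (Hc1 : 0 < c + 1) by (unfold c; lra).
  destruct (gamma_majorant_near_0 a c m ltac:(unfold c; lra)) as [K [HK HB]].
  apply ex_RInt_gen_le with (D := fun t => 0 < t <= 1) (g := fun t => K * Rpower t c)
    (lg := K / (c + 1) * Rpower 1 (c + 1) - 0).
  - intros x y z Hx Hy Hz. split.
    + apply Rlt_le_trans with (Rmin x y); [apply Rmin_glb_lt|]; lra.
    + apply Rle_trans with (Rmax x y); [|apply Rmax_lub]; lra.
  - intros x Hx. apply continuous_gamma_majorant. lra.
  - intros x Hx. apply continuous_mult_R; [apply continuous_const | apply continuous_Rpower; lra].
  - intros x Hx. rewrite Rabs_pos_eq by apply gamma_majorant_ge_0. apply HB, Hx.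
  - exists (mkposreal 1 Rlt_0_1). intros y Hy Hy0.
    change (Rabs (y - 0) < 1) in Hy. rewrite Rminus_0_r, Rabs_pos_eq in Hy; lra.
  - unfold at_point. lra.
  - apply (is_RInt_gen_antiderivative (fun t => 0 < t) (fun t => K / (c + 1) * Rpower t (c + 1))).
    + apply open_gt.
    + exists (fun t => 0 < t) (fun t => t = 1); [apply at_right_0_pos | reflexivity|].
      intros x y Hx Hy z Hz. simpl in *. subst y.
      apply Rlt_le_trans with (Rmin x 1); [apply Rmin_glb_lt|]; lra.
    + intros x Hx.
      replace (K * Rpower x c) with (K / (c + 1) * ((c + 1) * Rpower x (c + 1 - 1)))
        by (replace (c + 1 - 1) with c by ring; field; lra).
      apply is_derive_scal, is_derive_Rpower, Hx.
    + intros x Hx. apply continuous_mult_R; [apply continuous_const | apply continuous_Rpower, Hx].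
    + apply filterlim_scal_0, filterlim_Rpower_at_right_0, Hc1.
    + apply (filterlim_at_point_R (fun t => K / (c + 1) * Rpower t (c + 1))).
Qed.

Lemma ex_RInt_gen_gamma_majorant_1_p_infty a m :
  ex_RInt_gen (gamma_majorant a m) (at_point 1) (Rbar_locally p_infty).
Proof.
  destruct (gamma_majorant_near_p_infty a m) as [K [HK HB]].
  apply ex_RInt_gen_le with (D := fun t => 1 <= t) (g := fun t => K * exp (- t / 2))
    (lg := 0 - (- 2 * K) * exp (- 1 / 2)).
  - intros x y z Hx Hy Hz. apply Rle_trans with (Rmin x y); [apply Rmin_glb|]; lra.
  - intros x Hx. apply continuous_gamma_majorant. lra.
  - intros x Hx. apply ex_derive_continuous_R. auto_derive. trivial.
  - intros x Hx. rewrite Rabs_pos_eq by apply gamma_majorant_ge_0. apply HB, Hx.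
  - unfold at_point. lra.
  - exists 1. intros; lra.
  - apply (is_RInt_gen_antiderivative (fun t => 0 < t) (fun t => - 2 * K * exp (- t / 2))).
    + apply open_gt.
    + exists (fun t => t = 1) (fun t => 1 < t); [reflexivity | exists 1; intros; assumption|].
      intros x y Hx Hy z Hz. simpl in *. subst x.
      apply Rlt_le_trans with (Rmin 1 y); [apply Rmin_glb_lt|]; lra.
    + intros x Hx. auto_derive; [trivial|]. unfold Rdiv. field.
    + intros x Hx. apply ex_derive_continuous_R. auto_derive. trivial.
    + apply (filterlim_at_point_R (fun t => - 2 * K * exp (- t / 2))).
    + apply filterlim_scal_0, filterlim_exp_half_p_infty.
Qed.

Lemma ex_RInt_gen_gamma_majorant a m :
  -1 < a -> ex_RInt_gen (gamma_majorant a m) (at_right 0) (Rbar_locally p_infty).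
Proof.
  intros Ha. apply ex_RInt_gen_Chasles with 1.
  - apply ex_RInt_gen_gamma_majorant_0_1, Ha.
  - apply ex_RInt_gen_gamma_majorant_1_p_infty.
Qed.

Definition gamma_integrand (x : R) (j : nat) (t : R) : R :=
  Rpower t (x - 1) * ln t ^ j * exp (- t).

Definition Gamma_Dn (j : nat) (x : R) : R :=
  RInt_gen (gamma_integrand x j) (at_right 0) (Rbar_locally p_infty).

Lemma Gamma_Dn_0 x : Gamma x = Gamma_Dn 0 x.
Proof.
  unfold Gamma, Gamma_Dn. f_equal. apply functional_extensionality. intros t.
  unfold gamma_integrand. simpl. ring.
Qed.

Lemma abs_gamma_integrand x j t : Rabs (gamma_integrand x j t) = gamma_majorant (x - 1) j t.
Proof.
  unfold gamma_integrand, gamma_majorant. rewrite !Rabs_mult, <- RPow_abs.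
  rewrite (Rabs_pos_eq (Rpower _ _)), (Rabs_pos_eq (exp _)); trivial;
    left; [apply exp_pos | apply Rpower_pos].
Qed.

Lemma continuous_gamma_integrand x j t : 0 < t -> continuous (gamma_integrand x j) t.
Proof.
  intros Ht. unfold gamma_integrand.
  apply continuous_mult_R; [apply continuous_mult_R|].
  - apply continuous_Rpower, Ht.
  - apply continuous_pow_R, continuous_ln, Ht.
  - apply continuous_exp_opp.
Qed.

Lemma is_RInt_gen_gamma_integrand x j : 0 < x ->
  is_RInt_gen (gamma_integrand x j) (at_right 0) (Rbar_locally p_infty) (Gamma_Dn j x).
Proof.
  intros Hx. apply RInt_gen_correct_0_p_infty.
  apply ex_RInt_gen_le with (D := fun t => 0 < t) (g := gamma_majorant (x - 1) j)
    (lg := RInt_gen (gamma_majorant (x - 1) j) (at_right 0) (Rbar_locally p_infty)).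
  - intros a b z Ha Hb Hz. apply Rlt_le_trans with (Rmin a b); [apply Rmin_glb_lt|]; lra.
  - intros; apply continuous_gamma_integrand; assumption.
  - intros; apply continuous_gamma_majorant; assumption.
  - intros t _. rewrite abs_gamma_integrand. apply Rle_refl.
  - apply at_right_0_pos.
  - apply p_infty_pos.
  - apply RInt_gen_correct_0_p_infty, ex_RInt_gen_gamma_majorant. lra.
Qed.

Lemma is_RInt_gen_gamma_majorant a m : -1 < a ->
  is_RInt_gen (gamma_majorant a m) (at_right 0) (Rbar_locally p_infty)
    (RInt_gen (gamma_majorant a m) (at_right 0) (Rbar_locally p_infty)).
Proof. intros Ha. apply RInt_gen_correct_0_p_infty, ex_RInt_gen_gamma_majorant, Ha. Qed.

Section RealImproperIntegrals.

Context {Fa Fb : (R -> Prop) -> Prop} {FFa : Filter Fa} {FFb : Filter Fb}.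

Lemma is_RInt_gen_plus_R (f g : R -> R) lf lg :
  is_RInt_gen f Fa Fb lf -> is_RInt_gen g Fa Fb lg ->
  is_RInt_gen (fun t => f t + g t) Fa Fb (lf + lg).
Proof. exact (is_RInt_gen_plus f g lf lg). Qed.

Lemma is_RInt_gen_minus_R (f g : R -> R) lf lg :
  is_RInt_gen f Fa Fb lf -> is_RInt_gen g Fa Fb lg ->
  is_RInt_gen (fun t => f t - g t) Fa Fb (lf - lg).
Proof. exact (is_RInt_gen_minus f g lf lg). Qed.

Lemma is_RInt_gen_scal_R (f : R -> R) k lf :
  is_RInt_gen f Fa Fb lf -> is_RInt_gen (fun t => k * f t) Fa Fb (k * lf).
Proof. exact (is_RInt_gen_scal f k lf). Qed.

End RealImproperIntegrals.

Lemma MVT_is_derive (f df : R -> R) a b : (forall x, is_derive f x (df x)) ->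
  exists c, Rmin a b <= c <= Rmax a b /\ f b - f a = df c * (b - a).
Proof.
  intros H. apply MVT_gen; [intros; apply H|].
  intros x _. apply continuity_pt_filterlim, ex_derive_continuous_R. eexists; apply H.
Qed.

Lemma abs_exp_sub_1_sub_le y : Rabs (exp y - 1 - y) <= y ^ 2 * exp (Rabs y).
Proof.
  destruct (MVT_is_derive (fun s => exp s - s) (fun s => exp s - 1) 0 y) as [c [Hc Ec]].
  { intros x. auto_derive; trivial. ring. }
  destruct (MVT_is_derive exp exp 0 c is_derive_exp) as [c' [Hc' Ec']].
  rewrite exp_0, Rminus_0_r in Ec, Ec'.
  replace (exp y - 1 - y) with ((exp c - 1) * y) by lra.
  rewrite Ec', !Rabs_mult, (Rabs_pos_eq (exp c')) by (left; apply exp_pos).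
  assert (Hcy : Rabs c <= Rabs y).
  { unfold Rmin, Rmax in Hc. destruct (Rle_dec 0 y); unfold Rabs;
      destruct (Rcase_abs c); destruct (Rcase_abs y); lra. }
  assert (Hc'y : c' <= Rabs y).
  { unfold Rmin, Rmax in Hc'. destruct (Rle_dec 0 c); unfold Rabs at 1 in Hcy;
      destruct (Rcase_abs c); lra. }
  assert (E := exp_le_compat _ _ Hc'y). assert (exp c' > 0) by apply exp_pos.
  assert (0 <= Rabs c) by apply Rabs_pos. assert (0 <= Rabs y) by apply Rabs_pos.
  replace (y ^ 2) with (Rabs y * Rabs y) by (rewrite <- Rabs_mult, Rabs_pos_eq; [ring | nra]).
  apply Rle_trans with (exp (Rabs y) * Rabs y * Rabs y); [|lra].
  apply Rmult_le_compat_r; [assumption|]. apply Rmult_le_compat; lra.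
Qed.

Lemma gamma_integrand_remainder_le x h j t : 0 < x -> Rabs h <= x / 2 -> 0 < t ->
  Rabs (gamma_integrand (x + h) j t - gamma_integrand x j t - h * gamma_integrand x (S j) t) <=
  h ^ 2 * (gamma_majorant (x - 1 + x / 2) (j + 2) t + gamma_majorant (x - 1 + - (x / 2)) (j + 2) t).
Proof.
  intros Hx Hh Ht. set (L := ln t). set (d := x / 2).
  assert (E : gamma_integrand (x + h) j t - gamma_integrand x j t - h * gamma_integrand x (S j) t
              = gamma_integrand x j t * (exp (h * L) - 1 - h * L)).
  { unfold gamma_integrand, Rpower. fold L.
    replace ((x + h - 1) * L) with ((x - 1) * L + h * L) by ring.
    rewrite exp_plus. simpl. ring. }
  rewrite E, Rabs_mult, abs_gamma_integrand.
  assert (B1 := abs_exp_sub_1_sub_le (h * L)).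
  assert (B2 : exp (Rabs (h * L)) <= Rpower t d + Rpower t (- d)).
  { assert (P1 := Rpower_pos t d). assert (P2 := Rpower_pos t (- d)).
    assert (Hd : Rabs (h * L) <= d * Rabs L)
      by (rewrite Rabs_mult; apply Rmult_le_compat_r; [apply Rabs_pos | assumption]).
    apply exp_le_compat in Hd. eapply Rle_trans; [apply Hd|].
    unfold Rpower in *. fold L in P1, P2 |- *. unfold Rabs at 1. destruct (Rcase_abs L).
    - replace (d * - L) with (- d * L) by ring. lra.
    - lra. }
  assert (B3 : (h * L) ^ 2 = h ^ 2 * Rabs L ^ 2) by (rewrite pow2_abs; ring).
  assert (P0 := gamma_majorant_ge_0 (x - 1) j t).
  eapply Rle_trans; [apply Rmult_le_compat_l; [apply P0 | apply B1]|].
  rewrite B3.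
  eapply Rle_trans.
  { apply Rmult_le_compat_l; [apply P0|]. apply Rmult_le_compat_l; [|apply B2].
    apply Rmult_le_pos; [apply pow2_ge_0 | apply pow_le, Rabs_pos]. }
  right. unfold gamma_majorant. rewrite !Rpower_plus. fold L. rewrite !pow_add. fold d. ring.
Qed.

Lemma Gamma_Dn_remainder_le j x : 0 < x -> exists M, forall h, Rabs h <= x / 2 ->
  Rabs (Gamma_Dn j (x + h) - Gamma_Dn j x - h * Gamma_Dn (S j) x) <= h ^ 2 * M.
Proof.
  intros Hx.
  exists (RInt_gen (gamma_majorant (x - 1 + x / 2) (j + 2)) (at_right 0) (Rbar_locally p_infty)
     + RInt_gen (gamma_majorant (x - 1 + - (x / 2)) (j + 2)) (at_right 0) (Rbar_locally p_infty)).
  intros h Hh.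
  assert (Hxh : 0 < x + h) by (unfold Rabs in Hh; destruct (Rcase_abs h); lra).
  assert (Hsplit : filter_prod (at_right 0) (Rbar_locally p_infty)
                     (fun ab => 0 < fst ab < 1 /\ 1 < snd ab)).
  { exists (fun a => 0 < a < 1) (fun b => 1 < b); [|exists 1; auto|auto].
    exists (mkposreal 1 Rlt_0_1). intros y Hy Hy0.
    change (Rabs (y - 0) < 1) in Hy. rewrite Rminus_0_r, Rabs_pos_eq in Hy; lra. }
  apply (RInt_gen_norm (Fa := at_right 0) (Fb := Rbar_locally p_infty)
    (fun t => gamma_integrand (x + h) j t - gamma_integrand x j t - h * gamma_integrand x (S j) t)
    (fun t => h ^ 2 * (gamma_majorant (x - 1 + x / 2) (j + 2) t
                       + gamma_majorant (x - 1 + - (x / 2)) (j + 2) t))).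
  - generalize Hsplit. apply filter_imp. intros [a b]; simpl; lra.
  - generalize Hsplit. apply filter_imp. intros [a b] Hab t Ht; simpl in *.
    apply gamma_integrand_remainder_le; trivial; lra.
  - apply is_RInt_gen_minus_R; [apply is_RInt_gen_minus_R|];
      [| |apply is_RInt_gen_scal_R]; apply is_RInt_gen_gamma_integrand; assumption.
  - apply is_RInt_gen_scal_R, is_RInt_gen_plus_R; apply is_RInt_gen_gamma_majorant; lra.
Qed.

Lemma is_derive_of_remainder_le (f : R -> R) x l M d : 0 < d ->
  (forall h, Rabs h <= d -> Rabs (f (x + h) - f x - h * l) <= h ^ 2 * M) ->
  is_derive f x l.
Proof.
  intros Hd Hf. apply is_derive_Reals. intros eps Heps.
  assert (HM : 0 < Rabs M + 1) by (generalize (Rabs_pos M); lra).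
  assert (Hdelta : 0 < Rmin d (eps / (Rabs M + 1)))
    by (apply Rmin_glb_lt; [lra | apply Rdiv_lt_0_compat; lra]).
  exists (mkposreal _ Hdelta). intros h Hh0 Hh. simpl in Hh.
  assert (Hh1 := Rle_trans _ _ _ (Rlt_le _ _ Hh) (Rmin_l d (eps / (Rabs M + 1)))).
  assert (Hh2 := Rlt_le_trans _ _ _ Hh (Rmin_r d (eps / (Rabs M + 1)))).
  assert (Ha : 0 < Rabs h) by (apply Rabs_pos_lt, Hh0).
  replace ((f (x + h) - f x) / h - l) with ((f (x + h) - f x - h * l) / h) by (field; assumption).
  unfold Rdiv. rewrite Rabs_mult, Rabs_inv.
  apply Rle_lt_trans with (h ^ 2 * M * / Rabs h).
  { apply Rmult_le_compat_r; [left; apply Rinv_0_lt_compat, Ha | apply Hf, Hh1]. }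
  replace (h ^ 2 * M * / Rabs h) with (Rabs h * M)
    by (rewrite <- (Rabs_pos_eq (h ^ 2)) by apply pow2_ge_0; rewrite <- RPow_abs; field; lra).
  apply Rle_lt_trans with (Rabs h * (Rabs M + 1)).
  - apply Rmult_le_compat_l; [lra|]. generalize (Rle_abs M); lra.
  - apply Rmult_lt_compat_r with (r := Rabs M + 1) in Hh2; [|assumption].
    unfold Rdiv in Hh2. rewrite Rmult_assoc, Rinv_l, Rmult_1_r in Hh2 by lra. exact Hh2.
Qed.

Lemma is_derive_Gamma_Dn j x : 0 < x -> is_derive (Gamma_Dn j) x (Gamma_Dn (S j) x).
Proof.
  intros Hx. destruct (Gamma_Dn_remainder_le j x Hx) as [M HM].
  apply (is_derive_of_remainder_le _ x _ M (x / 2)); [lra | exact HM].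
Qed.

Lemma Derive_n_Gamma n x : 0 < x -> Derive_n Gamma n x = Gamma_Dn n x /\ ex_derive_n Gamma n x.
Proof.
  revert x. induction n as [|n IHn]; intros x Hx.
  - split; [apply Gamma_Dn_0 | exact I].
  - assert (Hloc : locally x (fun t => Gamma_Dn n t = Derive_n Gamma n t)).
    { apply (locally_open (fun t => 0 < t)); [apply open_gt | | exact Hx].
      intros t Ht. symmetry. apply IHn, Ht. }
    split; simpl.
    + rewrite <- (Derive_ext_loc (Gamma_Dn n)) by exact Hloc.
      apply is_derive_unique, is_derive_Gamma_Dn, Hx.
    + apply (ex_derive_ext_loc (Gamma_Dn n)); [exact Hloc|].
      eexists. apply is_derive_Gamma_Dn, Hx.
Qed.

Lemma continuous_Gamma x : 0 < x -> continuous Gamma x.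
Proof. intros Hx. apply ex_derive_continuous_R, (proj2 (Derive_n_Gamma 1 x Hx)). Qed.

(* Integration by parts, with the antiderivative [- t ^ x e ^ -t] vanishing at both ends. *)
Lemma Gamma_succ x : 0 < x -> Gamma (x + 1) = x * Gamma x.
Proof.
  intros Hx. rewrite !Gamma_Dn_0.
  assert (Habs : forall y, Rabs (-1 * (Rpower y x * exp (- y))) = Rpower y x * exp (- y)).
  { intros y. replace (-1 * (Rpower y x * exp (- y))) with (- (Rpower y x * exp (- y))) by ring.
    rewrite Rabs_Ropp. apply Rabs_pos_eq, Rmult_le_pos; left; [apply Rpower_pos | apply exp_pos]. }
  assert (H1 : is_RInt_gen (fun t => gamma_integrand (x + 1) 0 t - x * gamma_integrand x 0 t)
                 (at_right 0) (Rbar_locally p_infty) (Gamma_Dn 0 (x + 1) - x * Gamma_Dn 0 x)).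
  { apply is_RInt_gen_minus_R; [|apply is_RInt_gen_scal_R];
      apply is_RInt_gen_gamma_integrand; lra. }
  assert (H2 : is_RInt_gen (fun t => gamma_integrand (x + 1) 0 t - x * gamma_integrand x 0 t)
                 (at_right 0) (Rbar_locally p_infty) (0 - 0)).
  { apply (is_RInt_gen_antiderivative (fun t => 0 < t) (fun t => -1 * (Rpower t x * exp (- t)))).
    - apply open_gt.
    - apply filter_prod_0_p_infty_pos.
    - intros t Ht.
      replace (gamma_integrand (x + 1) 0 t - x * gamma_integrand x 0 t) with
        (-1 * ((x * Rpower t (x - 1)) * exp (- t) + Rpower t x * (- exp (- t))))
        by (unfold gamma_integrand; replace (x + 1 - 1) with x by ring; simpl; ring).
      apply is_derive_scal, (Derive.is_derive_mult (fun t => Rpower t x) (fun t => exp (- t))).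
      + apply is_derive_Rpower, Ht.
      + auto_derive; trivial. ring.
    - intros t Ht. apply (continuous_minus (V := R_NormedModule)).
      + apply continuous_gamma_integrand, Ht.
      + apply continuous_mult_R; [apply continuous_const | apply continuous_gamma_integrand, Ht].
    - apply filterlim_abs_le_0 with (fun t => Rpower t x).
      + apply filterlim_Rpower_at_right_0, Hx.
      + exists (mkposreal 1 Rlt_0_1). intros y _ Hy. simpl. rewrite Habs.
        assert (exp (- y) <= 1) by (rewrite <- exp_0; apply exp_le_compat; lra).
        assert (0 < Rpower y x) by apply Rpower_pos. nra.
    - destruct (gamma_majorant_near_p_infty x 0) as [K [HK HB]].
      apply filterlim_abs_le_0 with (fun t => K * exp (- t / 2)).
      + apply filterlim_scal_0, filterlim_exp_half_p_infty.
      + exists 1. intros y Hy. rewrite Habs.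
        generalize (HB y ltac:(lra)). unfold gamma_majorant. simpl. rewrite Rmult_1_r. trivial. }
  assert (E1 := is_RInt_gen_unique_0_p_infty _ _ H1).
  assert (E2 := is_RInt_gen_unique_0_p_infty _ _ H2). lra.
Qed.

Lemma Gamma_1 : Gamma 1 = 1.
Proof.
  rewrite Gamma_Dn_0.
  assert (H : is_RInt_gen (gamma_integrand 1 0) (at_right 0) (Rbar_locally p_infty)
                 (0 - (-1 * exp (- 0)))).
  { apply (is_RInt_gen_antiderivative (fun t => 0 < t) (fun t => -1 * exp (- t))).
    - apply open_gt.
    - apply filter_prod_0_p_infty_pos.
    - intros t Ht. replace (gamma_integrand 1 0 t) with (exp (- t)).
      + auto_derive; trivial. ring.
      + unfold gamma_integrand, Rpower. rewrite Rminus_diag, Rmult_0_l, exp_0. simpl. ring.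
    - intros t Ht. apply continuous_gamma_integrand, Ht.
    - apply (filterlim_at_right_continuous (fun t => -1 * exp (- t))).
      apply ex_derive_continuous_R. auto_derive. trivial.
    - apply filterlim_abs_le_0 with (fun t => exp (- t / 2)); [apply filterlim_exp_half_p_infty|].
      exists 0. intros y Hy.
      replace (-1 * exp (- y)) with (- exp (- y)) by ring.
      rewrite Rabs_Ropp, Rabs_pos_eq by (left; apply exp_pos). apply exp_le_compat. lra. }
  unfold Gamma_Dn. rewrite (is_RInt_gen_unique_0_p_infty _ _ H), Ropp_0, exp_0. ring.
Qed.

Lemma Gamma_INR_succ k : Gamma (INR k + 1) = INR (fact k).
Proof.
  induction k as [|k IHk].
  - simpl. rewrite Rplus_0_l. apply Gamma_1.
  - rewrite S_INR, Gamma_succ, IHk by (generalize (pos_INR k); lra).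
    change (fact (S k)) with (S k * fact k)%nat. rewrite mult_INR, S_INR. reflexivity.
Qed.

(** * Smooth functions and Taylor coefficients *)

Definition Cn_on (U : R -> Prop) (n : nat) (f : R -> R) : Prop :=
  forall y, U y -> forall k, (k <= n)%nat -> ex_derive_n f k y.

Definition smooth_on (U : R -> Prop) (f : R -> R) : Prop := forall n, Cn_on U n f.

Lemma Derive_n_S_Derive (f : R -> R) k t : Derive_n f (S k) t = Derive_n (Derive f) k t.
Proof.
  revert t. induction k as [|k IHk]; intros t.
  - reflexivity.
  - simpl. apply Derive_ext, IHk.
Qed.

Lemma ex_derive_n_SS_Derive (f : R -> R) k y :
  ex_derive_n f (S (S k)) y <-> ex_derive_n (Derive f) (S k) y.
Proof.
  change (ex_derive (Derive_n f (S k)) y <-> ex_derive (Derive_n (Derive f) k) y).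
  split; apply ex_derive_ext; intros t; [|symmetry]; apply Derive_n_S_Derive.
Qed.

Lemma Derive_n_exp n y : Derive_n exp n y = exp y.
Proof.
  revert y. induction n as [|n IHn]; intros y; [reflexivity|].
  simpl. rewrite (Derive_ext _ exp _ IHn). apply is_derive_unique, is_derive_exp.
Qed.

Lemma ex_derive_n_exp n y : ex_derive_n exp n y.
Proof.
  destruct n as [|n]; [exact I|]. simpl.
  apply ex_derive_ext with exp; [intros t; symmetry; apply Derive_n_exp|].
  eexists. apply is_derive_exp.
Qed.

Section CnOn.

Variable U : R -> Prop.
Hypothesis U_open : open U.

Lemma Cn_on_locally n f y : U y -> Cn_on U n f ->
  locally y (fun t => forall k, (k <= n)%nat -> ex_derive_n f k t).
Proof. intros Hy H. apply (locally_open U); assumption. Qed.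

Lemma Cn_on_S n f : Cn_on U (S n) f -> Cn_on U n f.
Proof. intros H y Hy k Hk. apply H; auto. Qed.

Lemma Cn_on_ex_derive n f y : Cn_on U (S n) f -> U y -> ex_derive f y.
Proof. intros H Hy. apply (H y Hy 1%nat). lia. Qed.

Lemma Cn_on_Derive n f : Cn_on U (S n) f -> Cn_on U n (Derive f).
Proof.
  intros H y Hy [|k] Hk; [exact I|].
  apply (proj1 (ex_derive_n_SS_Derive f k y)), H; [assumption | lia].
Qed.

Lemma smooth_on_Derive f : smooth_on U f -> smooth_on U (Derive f).
Proof. intros H n. apply Cn_on_Derive, H. Qed.

Lemma Cn_on_ext n f g : (forall t, f t = g t) -> Cn_on U n f -> Cn_on U n g.
Proof. intros E H y Hy k Hk. apply ex_derive_n_ext with f; auto. Qed.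

Lemma Cn_on_const n a : Cn_on U n (fun _ => a).
Proof. intros y Hy k Hk. apply ex_derive_n_const. Qed.

Lemma Cn_on_scal n f a : Cn_on U n f -> Cn_on U n (fun t => a * f t).
Proof. intros Hf y Hy k Hk. apply ex_derive_n_scal_l, Hf; assumption. Qed.

Lemma Cn_on_plus n f g : Cn_on U n f -> Cn_on U n g -> Cn_on U n (fun t => f t + g t).
Proof.
  intros Hf Hg y Hy k Hk. apply ex_derive_n_plus.
  - generalize (Cn_on_locally n f y Hy Hf). apply filter_imp. intros t Ht j Hj. apply Ht. lia.
  - generalize (Cn_on_locally n g y Hy Hg). apply filter_imp. intros t Ht j Hj. apply Ht. lia.
Qed.

Lemma Cn_on_mult n : forall f g, Cn_on U n f -> Cn_on U n g -> Cn_on U n (fun t => f t * g t).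
Proof.
  induction n as [|n IHn]; intros f g Hf Hg y Hy [|[|k]] Hk.
  1, 4: exact I.
  1, 2: lia.
  - apply ex_derive_mult; [apply (Cn_on_ex_derive n f) | apply (Cn_on_ex_derive n g)]; assumption.
  - apply (proj2 (ex_derive_n_SS_Derive _ k y)).
    apply ex_derive_n_ext_loc with (fun t => Derive f t * g t + f t * Derive g t).
    + apply (locally_open U); [assumption | | assumption]. intros t Ht. symmetry.
      apply Derive_mult; [apply (Cn_on_ex_derive n f) | apply (Cn_on_ex_derive n g)]; assumption.
    + apply (Cn_on_plus n); [apply IHn | apply IHn | assumption | lia].
      * apply Cn_on_Derive, Hf.
      * apply Cn_on_S, Hg.
      * apply Cn_on_S, Hf.
      * apply Cn_on_Derive, Hg.
Qed.

Lemma Cn_on_pow n f m : Cn_on U n f -> Cn_on U n (fun t => f t ^ m).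
Proof.
  intros Hf. induction m as [|m IHm].
  - apply (Cn_on_ext n (fun _ => 1)); [reflexivity | apply Cn_on_const].
  - apply (Cn_on_mult n); assumption.
Qed.

Lemma Cn_on_inv f : (forall t, U t -> f t <> 0) ->
  forall n, Cn_on U n f -> Cn_on U n (fun t => / f t).
Proof.
  intros Hnz. induction n as [|n IHn]; intros Hf y Hy [|[|k]] Hk.
  1, 4: exact I.
  1, 2: lia.
  - eexists. apply is_derive_inv; [|apply Hnz, Hy].
    apply Derive_correct, (Cn_on_ex_derive n f); assumption.
  - apply (proj2 (ex_derive_n_SS_Derive _ k y)).
    apply ex_derive_n_ext_loc with (fun t => (-1 * Derive f t) * (/ f t * / f t)).
    + apply (locally_open U); [assumption | | assumption]. intros t Ht. symmetry.
      assert (Hft := Hnz t Ht).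
      rewrite (is_derive_unique _ _ _ (is_derive_inv f t (Derive f t)
        (Derive_correct f t (Cn_on_ex_derive n f t Hf Ht)) Hft)).
      field. exact Hft.
    + apply (Cn_on_mult n); [apply Cn_on_scal, Cn_on_Derive, Hf | | assumption | lia].
      apply (Cn_on_mult n); apply IHn, Cn_on_S, Hf.
Qed.

Lemma Cn_on_exp_scal n a : Cn_on U n (fun z => exp (a * z)).
Proof.
  intros y Hy k Hk. apply ex_derive_n_comp_scal, filter_forall. intros t j _.
  apply ex_derive_n_exp.
Qed.

End CnOn.

Lemma open_reflect (V : R -> Prop) c : open V -> open (fun z => V (c - z)).
Proof.
  intros HV x Hx. destruct (HV _ Hx) as [e He]. exists e. intros y Hy. apply He.
  change (Rabs ((c - y) - (c - x)) < e). change (Rabs (y - x) < e) in Hy.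
  replace ((c - y) - (c - x)) with (- (y - x)) by ring. rewrite Rabs_Ropp. exact Hy.
Qed.

Lemma Cn_on_reflect V n q c : open V -> Cn_on V n q ->
  Cn_on (fun z => V (c - z)) n (fun z => q (c - z)).
Proof.
  intros HV Hq y Hy k Hk.
  apply ex_derive_n_ext with (fun t => (fun w => q (- w)) (t + - c)); [intros t; f_equal; ring|].
  apply (ex_derive_n_comp_trans (fun w => q (- w)) k y (- c)).
  apply (ex_derive_n_comp_opp q k (y + - c)).
  replace (- (y + - c)) with (c - y) by ring.
  generalize (Cn_on_locally V HV n q (c - y) Hy Hq). apply filter_imp. intros t Ht j Hj. apply Ht. lia.
Qed.

Lemma is_derive_minus_R (f g : R -> R) x df dg :
  is_derive f x df -> is_derive g x dg -> is_derive (fun t => f t - g t) x (df - dg).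
Proof. exact (is_derive_minus (K := R_AbsRing) (V := R_NormedModule) f g x df dg). Qed.

Section TaylorCoefficients.

Variable U : R -> Prop.
Hypothesis U_open : open U.

Lemma Derive_n_affine_mul g c : smooth_on U g -> forall n y, U y ->
  Derive_n (fun z => (c - z) * g z) (S n) y =
  (c - y) * Derive_n g (S n) y - INR (S n) * Derive_n g n y.
Proof.
  intros Hg n. induction n as [|n IHn]; intros y Hy.
  - change (Derive (fun z => (c - z) * g z) y = (c - y) * Derive g y - INR 1 * g y).
    assert (Hd : is_derive (fun z => c - z) y (-1)) by (auto_derive; trivial; ring).
    rewrite (Derive_mult (fun z => c - z) g y);
      [|eexists; exact Hd | apply (Cn_on_ex_derive U 0 g y (Hg 1%nat) Hy)].
    assert (Hd' : Derive (fun z => c - z) y = -1) by (apply is_derive_unique, Hd).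
    rewrite Hd'. simpl. ring.
  - change (Derive (Derive_n (fun z => (c - z) * g z) (S n)) y =
      (c - y) * Derive (Derive_n g (S n)) y - INR (S (S n)) * Derive (Derive_n g n) y).
    etransitivity.
    { apply (Derive_ext_loc _ (fun w => (c - w) * Derive_n g (S n) w - INR (S n) * Derive_n g n w)).
      apply (locally_open U); assumption. }
    assert (E1 : ex_derive (Derive_n g (S n)) y) by (apply (Hg (S (S n)) y Hy (S (S n))); lia).
    assert (E0 : ex_derive (Derive_n g n) y) by (apply (Hg (S n) y Hy (S n)); lia).
    assert (Hd : is_derive (fun z => c - z) y (-1)) by (auto_derive; trivial; ring).
    assert (Ev : Derive (fun w => (c - w) * Derive_n g (S n) w - INR (S n) * Derive_n g n w) y
      = (-1 * Derive_n g (S n) y + (c - y) * Derive (Derive_n g (S n)) y)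
        - INR (S n) * Derive (Derive_n g n) y).
    { apply is_derive_unique, is_derive_minus_R.
      - apply (Derive.is_derive_mult (fun z => c - z)); [exact Hd | apply Derive_correct, E1].
      - apply is_derive_scal, Derive_correct, E0. }
    etransitivity; [exact Ev|].
    rewrite (S_INR (S n)). change (Derive_n g (S n) y) with (Derive (Derive_n g n) y). ring.
Qed.

Lemma taylor_coeff_affine_mul g c r : U 0 -> smooth_on U g ->
  taylor_coeff (fun z => (c - z) * g z) (S r) = c * taylor_coeff g (S r) - taylor_coeff g r.
Proof.
  intros H0 Hg. unfold taylor_coeff.
  rewrite (Derive_n_affine_mul g c Hg r 0 H0), Rminus_0_r.
  change (fact (S r)) with (S r * fact r)%nat. rewrite mult_INR.
  assert (0 < INR (fact r)) by apply INR_fact_lt_0.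
  assert (0 < INR (S r)) by apply lt_0_INR, Nat.lt_0_succ.
  field. lra.
Qed.

(* Each derivative of [f ^ m * h] of order [j < m] keeps a factor [f]. *)
Lemma Derive_n_pow_mul_zero f : U 0 -> smooth_on U f -> f 0 = 0 ->
  forall j m h, (j < m)%nat -> smooth_on U h -> Derive_n (fun z => f z ^ m * h z) j 0 = 0.
Proof.
  intros H0 Hf Hf0 j. induction j as [|j IHj]; intros m h Hjm Hh.
  - simpl. rewrite Hf0, pow_i by lia. ring.
  - rewrite Derive_n_S_Derive.
    rewrite (Derive_n_ext_loc _ (fun z => INR m * (f z ^ pred m * (Derive f z * h z))
                                          + f z ^ m * Derive h z)).
    2: { apply (locally_open U); [assumption | | assumption]. intros t Ht.
         assert (Ef : ex_derive f t) by apply (Cn_on_ex_derive U 0 f t (Hf 1%nat) Ht).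
         assert (Eh : ex_derive h t) by apply (Cn_on_ex_derive U 0 h t (Hh 1%nat) Ht).
         rewrite (is_derive_unique _ _ _ (Derive.is_derive_mult (fun z => f z ^ m) h t _ _
            (is_derive_pow f m t _ (Derive_correct _ _ Ef)) (Derive_correct _ _ Eh))).
         ring. }
    assert (C1 : smooth_on U (fun z => INR m * (f z ^ pred m * (Derive f z * h z)))).
    { intros n. apply Cn_on_scal, (Cn_on_mult U U_open n); [apply Cn_on_pow; trivial|].
      apply (Cn_on_mult U U_open n); [apply smooth_on_Derive|]; trivial. }
    assert (C2 : smooth_on U (fun z => f z ^ m * Derive h z)).
    { intros n. apply (Cn_on_mult U U_open n); [apply Cn_on_pow|apply smooth_on_Derive]; trivial. }
    rewrite (Derive_n_plus _ _ j 0);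
      [|apply (Cn_on_locally U U_open j _ 0 H0 (C1 j)) | apply (Cn_on_locally U U_open j _ 0 H0 (C2 j))].
    rewrite (Derive_n_scal_l _ j (INR m) 0).
    rewrite (IHj (pred m) (fun z => Derive f z * h z)), (IHj m (Derive h)); try lia.
    + ring.
    + apply smooth_on_Derive, Hh.
    + intros n. apply (Cn_on_mult U U_open n); [apply smooth_on_Derive|]; trivial.
Qed.

Lemma taylor_coeff_pow_zero f n m : U 0 -> smooth_on U f -> f 0 = 0 -> (n < m)%nat ->
  taylor_coeff (fun z => f z ^ m) n = 0.
Proof.
  intros H0 Hf Hf0 Hnm. unfold taylor_coeff.
  rewrite (Derive_n_ext (fun z => f z ^ m) (fun z => f z ^ m * 1)) by (intros; ring).
  rewrite (Derive_n_pow_mul_zero f H0 Hf Hf0 n m (fun _ => 1) Hnm); [unfold Rdiv; ring|].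
  intros k. apply Cn_on_const.
Qed.

End TaylorCoefficients.

(** * The coefficients [E_{n,m}] and [C_{r,kappa}] *)

Definition exp_coeff (n : nat) : R := / INR (fact n).

Lemma CV_radius_exp_coeff : CV_radius exp_coeff = p_infty.
Proof.
  apply CV_radius_infinite_DAlembert.
  - intros n. apply Rinv_neq_0_compat, INR_fact_neq_0.
  - apply is_lim_seq_ext with (fun n => / INR (S n)).
    + intros n. unfold exp_coeff. change (fact (S n)) with (S n * fact n)%nat.
      rewrite mult_INR.
      assert (0 < INR (fact n)) by apply INR_fact_lt_0.
      assert (0 < INR (S n)) by apply lt_0_INR, Nat.lt_0_succ.
      rewrite Rabs_pos_eq; [field; lra|].
      unfold Rdiv. rewrite Rinv_inv, Rinv_mult.
      apply Rmult_le_pos; [apply Rmult_le_pos|]; left; try apply Rinv_0_lt_compat; assumption.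
    + apply (is_lim_seq_incr_1 (fun n => / INR n) 0).
      replace (Finite 0) with (Rbar_inv p_infty) by reflexivity.
      apply is_lim_seq_inv; [apply is_lim_seq_INR | discriminate].
Qed.

(* The entire function that agrees with [(1 - e^-t) / t] off [0]; the integrand of [Ein]
   instead takes the junk value [(1 - 1) / 0 = 0] at [0]. *)
Definition Ein_integrand (t : R) : R := PSeries (PS_decr_1 exp_coeff) (- t).

Lemma Ein_integrand_eq t : t <> 0 -> (1 - exp (- t)) / t = Ein_integrand t.
Proof.
  intros Ht. unfold Ein_integrand.
  replace (exp (- t)) with (PSeries exp_coeff (- t)) by (rewrite exp_Reals; reflexivity).
  rewrite (PSeries_decr_1 exp_coeff (- t)).
  - unfold exp_coeff at 1. simpl. rewrite Rinv_1. field. exact Ht.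
  - apply CV_radius_inside. rewrite CV_radius_exp_coeff. exact I.
Qed.

Lemma ex_derive_n_Ein_integrand n y : ex_derive_n Ein_integrand n y.
Proof.
  unfold Ein_integrand. apply (ex_derive_n_comp_opp (PSeries (PS_decr_1 exp_coeff)) n y).
  apply filter_forall. intros t k _. apply ex_derive_n_PSeries.
  rewrite CV_radius_decr_1, CV_radius_exp_coeff. exact I.
Qed.

Lemma continuous_Ein_integrand y : continuous Ein_integrand y.
Proof. apply ex_derive_continuous_R, (ex_derive_n_Ein_integrand 1 y). Qed.

Lemma is_derive_Ein y : is_derive Ein y (Ein_integrand y).
Proof.
  assert (HE : Ein = fun z => RInt Ein_integrand 0 z).
  { apply functional_extensionality. intros z. unfold Ein. apply RInt_ext.
    intros x Hx. apply Ein_integrand_eq. intros E; subst x.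
    unfold Rmin, Rmax in Hx. destruct (Rle_dec 0 z); lra. }
  rewrite HE. apply (is_derive_RInt (V := R_NormedModule) Ein_integrand _ 0 y).
  - apply filter_forall. intros b. apply RInt_correct_R, ex_RInt_continuous_R.
    intros; apply continuous_Ein_integrand.
  - apply continuous_Ein_integrand.
Qed.

Lemma smooth_on_Ein : smooth_on (fun _ => True) Ein.
Proof.
  intros n y _ [|[|k]] _.
  - exact I.
  - eexists. apply is_derive_Ein.
  - apply (proj2 (ex_derive_n_SS_Derive Ein k y)).
    apply (ex_derive_n_ext Ein_integrand); [|apply ex_derive_n_Ein_integrand].
    intros t. symmetry. apply is_derive_unique, is_derive_Ein.
Qed.

Lemma Ein_0 : Ein 0 = 0.
Proof. exact (RInt_point (V := R_CompleteNormedModule) 0 _). Qed.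

Lemma Ecoef_lt n m : (n < m)%nat -> Ecoef n m = 0.
Proof.
  intros Hnm. apply (taylor_coeff_pow_zero (fun _ => True) open_true); trivial.
  - apply smooth_on_Ein.
  - apply Ein_0.
Qed.

Definition Gamma_nonzero_dom (w : R) : Prop := 0 < w /\ Gamma w <> 0.

Lemma open_Gamma_nonzero_dom : open Gamma_nonzero_dom.
Proof.
  intros w [Hw HG]. apply filter_and.
  - apply (locally_open (fun t => 0 < t)); [apply open_gt | | exact Hw]. trivial.
  - generalize (continuous_Gamma w Hw _ (locally_ball _ (mkposreal _ (Rabs_pos_lt _ HG)))).
    unfold filtermap. apply filter_imp. intros y Hy E.
    change (Rabs (Gamma y - Gamma w) < Rabs (Gamma w)) in Hy.
    rewrite E, Rminus_0_l, Rabs_Ropp in Hy. lra.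
Qed.

Lemma smooth_on_inv_Gamma : smooth_on Gamma_nonzero_dom (fun w => / Gamma w).
Proof.
  intros n. apply (Cn_on_inv _ open_Gamma_nonzero_dom); [intros t [_ H]; exact H|].
  intros y [Hy _] k _. apply (Derive_n_Gamma k y Hy).
Qed.

Definition Ccoef_generating (kappa : nat) (z : R) : R :=
  exp (euler_gamma * z) / Gamma (INR kappa + 1 - z).

(* From [Gamma (kappa + 1 - z) = (kappa - z) Gamma (kappa - z)]. *)
Lemma Ccoef_generating_pred k : (1 <= k)%nat -> locally 0 (fun z =>
  Ccoef_generating (k - 1) z = (INR k - z) * Ccoef_generating k z).
Proof.
  intros Hk. exists (mkposreal 1 Rlt_0_1). intros z Hz.
  change (Rabs (z - 0) < 1) in Hz. rewrite Rminus_0_r in Hz.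
  assert (Hz1 : -1 < z < 1) by (unfold Rabs in Hz; destruct (Rcase_abs z); lra).
  assert (Hc1 : 1 <= INR k) by (apply (le_INR 1); assumption).
  unfold Ccoef_generating. rewrite minus_INR by assumption. simpl INR.
  replace (INR k - 1 + 1 - z) with (INR k - z) by ring.
  replace (INR k + 1 - z) with ((INR k - z) + 1) by ring.
  rewrite Gamma_succ by lra. unfold Rdiv. rewrite Rinv_mult.
  replace ((INR k - z) * (exp (euler_gamma * z) * (/ (INR k - z) * / Gamma (INR k - z))))
    with (((INR k - z) * / (INR k - z)) * (exp (euler_gamma * z) * / Gamma (INR k - z))) by ring.
  rewrite Rinv_r by lra. ring.
Qed.

Lemma smooth_on_Ccoef_generating k :
  smooth_on (fun z => Gamma_nonzero_dom (INR k + 1 - z)) (Ccoef_generating k).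
Proof.
  intros n. apply (Cn_on_ext _ n (fun z => exp (euler_gamma * z) * / Gamma (INR k + 1 - z)));
    [reflexivity|].
  apply Cn_on_mult; [apply open_reflect, open_Gamma_nonzero_dom | apply Cn_on_exp_scal|].
  apply (Cn_on_reflect Gamma_nonzero_dom n (fun w => / Gamma w)).
  - apply open_Gamma_nonzero_dom.
  - apply smooth_on_inv_Gamma.
Qed.

Lemma Ccoef_pred_0 k : (1 <= k)%nat -> Ccoef 0 (k - 1) = INR k * Ccoef 0 k.
Proof.
  intros Hk. unfold Ccoef, taylor_coeff. simpl.
  change (Ccoef_generating (k - 1) 0 / 1 = INR k * (Ccoef_generating k 0 / 1)).
  rewrite (locally_singleton _ _ (Ccoef_generating_pred k Hk)). lra.
Qed.

Lemma Ccoef_pred_S k r : (1 <= k)%nat ->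
  Ccoef (S r) (k - 1) = INR k * Ccoef (S r) k - Ccoef r k.
Proof.
  intros Hk. unfold Ccoef. fold (Ccoef_generating (k - 1)) (Ccoef_generating k).
  unfold taylor_coeff at 1.
  rewrite (Derive_n_ext_loc _ _ (S r) 0 (Ccoef_generating_pred k Hk)).
  apply (taylor_coeff_affine_mul _ (open_reflect _ (INR k + 1) open_Gamma_nonzero_dom)).
  - unfold Gamma_nonzero_dom. rewrite Rminus_0_r. split.
    + generalize (pos_INR k); lra.
    + rewrite Gamma_INR_succ. apply INR_fact_neq_0.
  - apply smooth_on_Ccoef_generating.
Qed.

(** * Differentiating [Ktilde] *)

Lemma sum_n_m_plus_R (u v : nat -> R) n m :
  sum_n_m (fun k => u k + v k) n m = sum_n_m u n m + sum_n_m v n m.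
Proof. exact (sum_n_m_plus u v n m). Qed.

Lemma sum_n_m_mult_l_R (a : R) (u : nat -> R) n m :
  sum_n_m (fun k => a * u k) n m = a * sum_n_m u n m.
Proof. exact (sum_n_m_mult_l a u n m). Qed.

Lemma sum_n_Sm_R (a : nat -> R) n m : (n <= S m)%nat ->
  sum_n_m a n (S m) = sum_n_m a n m + a (S m).
Proof. exact (sum_n_Sm a n m). Qed.

Lemma sum_n_m_last_R (a : nat -> R) n m : (n <= m)%nat -> (1 <= m)%nat ->
  sum_n_m a n m = sum_n_m a n (m - 1) + a m.
Proof.
  intros Hnm Hm. destruct m as [|m]; [lia|].
  replace (S m - 1)%nat with m by lia. apply sum_n_Sm_R, Hnm.
Qed.

Lemma sum_Sn_m_R (a : nat -> R) n m : (n <= m)%nat -> sum_n_m a n m = a n + sum_n_m a (S n) m.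
Proof. exact (sum_Sn_m a n m). Qed.

Lemma sum_n_m_ext_loc_R (a b : nat -> R) n m :
  (forall k, (n <= k <= m)%nat -> a k = b k) -> sum_n_m a n m = sum_n_m b n m.
Proof. exact (sum_n_m_ext_loc a b n m). Qed.

Lemma sum_n_m_eq_0_R (a : nat -> R) n m :
  (forall k, (n <= k <= m)%nat -> a k = 0) -> sum_n_m a n m = 0.
Proof.
  intros H. rewrite (sum_n_m_ext_loc_R a (fun _ => 0)) by exact H.
  exact (sum_n_m_const_zero n m).
Qed.

Lemma sum_n_m_zero_R (a : nat -> R) n m : (m < n)%nat -> sum_n_m a n m = 0.
Proof. exact (sum_n_m_zero a n m). Qed.

Lemma is_derive_sum_n_m (f : nat -> R -> R) (df : nat -> R) a b x :
  (forall i, (a <= i <= b)%nat -> is_derive (f i) x (df i)) ->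
  is_derive (fun y => sum_n_m (fun i => f i y) a b) x (sum_n_m df a b).
Proof.
  induction b as [|b IHb]; intros H.
  - destruct a as [|a].
    + apply (is_derive_ext (f 0%nat)); [intros t; rewrite sum_n_n; reflexivity|].
      rewrite sum_n_n. apply H. lia.
    + apply (is_derive_ext (fun _ => 0)); [intros t; symmetry; apply sum_n_m_zero_R; lia|].
      rewrite sum_n_m_zero_R by lia. apply (is_derive_const (K := R_AbsRing) (V := R_NormedModule)).
  - destruct (le_lt_dec a (S b)) as [Hab|Hab].
    + apply (is_derive_ext (fun y => sum_n_m (fun i => f i y) a b + f (S b) y));
        [intros t; symmetry; apply sum_n_Sm_R, Hab|].
      rewrite sum_n_Sm_R by exact Hab.
      apply (is_derive_plus (K := R_AbsRing) (V := R_NormedModule));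
        [apply IHb; intros i Hi | ]; apply H; lia.
    + apply (is_derive_ext (fun _ => 0)); [intros t; symmetry; apply sum_n_m_zero_R, Hab|].
      rewrite sum_n_m_zero_R by exact Hab.
      apply (is_derive_const (K := R_AbsRing) (V := R_NormedModule)).
Qed.

Lemma is_derive_ln_pow q u : 0 < u ->
  is_derive (fun v => ln v ^ q) u (INR q * / u * ln u ^ pred q).
Proof. intros Hu. apply is_derive_pow, is_derive_ln, Hu. Qed.

Lemma Derive_ln_pow q u : 0 < u -> Derive (fun v => ln v ^ q) u = INR q * / u * ln u ^ pred q.
Proof. intros Hu. apply is_derive_unique, is_derive_ln_pow, Hu. Qed.

Lemma is_derive_pow_mul_ln_pow X p q u : 0 < u ->
  is_derive (fun v => X * v ^ p * ln v ^ q) u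
    (X * (INR p * u ^ pred p * ln u ^ q + u ^ p * Derive (fun v => ln v ^ q) u)).
Proof.
  intros Hu.
  assert (H1 : is_derive (fun v => v ^ p) u (INR p * 1 * u ^ pred p))
    by apply (is_derive_pow (fun v => v)), (is_derive_id (K := R_AbsRing)).
  replace (X * (INR p * u ^ pred p * ln u ^ q + u ^ p * Derive (fun v => ln v ^ q) u)) with
    (X * (INR p * 1 * u ^ pred p) * ln u ^ q + X * u ^ p * Derive (fun v => ln v ^ q) u) by ring.
  apply (Derive.is_derive_mult (fun v => X * v ^ p) (fun v => ln v ^ q)).
  - apply is_derive_scal, H1.
  - apply Derive_correct. eexists. apply is_derive_ln_pow, Hu.
Qed.

(* The coefficient of [u ^ (kappa - n) * ln u ^ (ell - m - r)] in [Ktilde ell u kappa]. *)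
Definition Kcoef (ell kappa m n r : nat) : R :=
  (-1) ^ r * Gamma (INR kappa + 1) / (INR (fact m) * INR (fact (ell - m - r)))
  * Ecoef n m * Ccoef r (kappa - n).

Definition Ktilde_deriv (ell : nat) (u : R) (kappa : nat) : R :=
  sum_n_m (fun m =>
    sum_n_m (fun n =>
      sum_n_m (fun r =>
        Kcoef ell kappa m n r *
        (INR (kappa - n) * u ^ pred (kappa - n) * ln u ^ (ell - m - r)
         + u ^ (kappa - n) * Derive (fun v => ln v ^ (ell - m - r)) u))
      0 (ell - m))
    m kappa)
  0 ell.

Lemma is_derive_Ktilde ell kappa u : 0 < u ->
  is_derive (fun v => Ktilde ell v kappa) u (Ktilde_deriv ell u kappa).
Proof.
  intros Hu. unfold Ktilde, Ktilde_deriv.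
  apply is_derive_sum_n_m. intros m _.
  apply is_derive_sum_n_m. intros n _.
  apply is_derive_sum_n_m. intros r _.
  apply is_derive_pow_mul_ln_pow, Hu.
Qed.

(* Shifting [r] by one, the [C r'] part of [C' r = k C r - C r'] cancels the derivative of the
   logarithmic factor. *)
Lemma sum_deriv_pow_ln_pow_telescope (N k : nat) (C C' : nat -> R) (u L : R) :
  (1 <= k)%nat -> u <> 0 ->
  C' 0%nat = INR k * C 0%nat -> (forall r, C' (S r) = INR k * C (S r) - C r) ->
  sum_n_m (fun r => (-1) ^ r / INR (fact (N - r)) * C r *
    (INR k * u ^ pred k * L ^ (N - r) + u ^ k * (INR (N - r) * / u * L ^ pred (N - r)))) 0 N
  = sum_n_m (fun r => (-1) ^ r / INR (fact (N - r)) * C' r * u ^ (k - 1) * L ^ (N - r)) 0 N.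
Proof.
  intros Hk Hu HC0 HCS.
  set (a := fun r => (-1) ^ r / INR (fact (N - r))).
  set (P := fun r => a r * C r * (u ^ k * (INR (N - r) * / u * L ^ pred (N - r)))).
  set (Q := fun r => a r * match r with O => 0 | S r' => C r' end * u ^ (k - 1) * L ^ (N - r)).
  set (X := fun r => a r * C r * INR k * u ^ (k - 1) * L ^ (N - r)).
  rewrite (sum_n_m_ext_loc_R _ (fun r => X r + P r))
    by (intros r _; unfold X, P, a; replace (pred k) with (k - 1)%nat by lia; ring).
  rewrite (sum_n_m_ext_loc_R (fun r => (-1) ^ r / INR (fact (N - r)) * C' r * u ^ (k - 1) * L ^ (N - r))
             (fun r => X r + -1 * Q r))
    by (intros [|r] _; unfold X, Q, a; [rewrite HC0 | rewrite HCS]; ring).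
  rewrite !sum_n_m_plus_R, sum_n_m_mult_l_R. f_equal.
  destruct N as [|N].
  - rewrite !sum_n_n. unfold P, Q. simpl. ring.
  - rewrite sum_n_Sm_R, (sum_Sn_m_R Q), <- sum_n_m_S by lia.
    replace (P (S N)) with 0 by (unfold P; rewrite Nat.sub_diag; simpl; ring).
    replace (Q 0%nat) with 0 by (unfold Q; ring).
    rewrite Rplus_0_r, Rplus_0_l, <- sum_n_m_mult_l_R.
    apply sum_n_m_ext_loc_R. intros s Hs. unfold P, Q, a.
    replace (S N - s)%nat with (S (N - s)) by lia.
    replace (S N - S s)%nat with (N - s)%nat by lia.
    set (d := (N - s)%nat).
    replace (u ^ k) with (u * u ^ (k - 1)) by (rewrite tech_pow_Rmult; f_equal; lia).
    change (fact (S d)) with (S d * fact d)%nat. rewrite mult_INR. simpl pred.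
    assert (0 < INR (fact d)) by apply INR_fact_lt_0.
    assert (0 < INR (S d)) by apply lt_0_INR, Nat.lt_0_succ.
    simpl pow. field. repeat split; lra.
Qed.

Lemma Ktilde_deriv_term_lt ell kappa m n u : (n < kappa)%nat -> 0 < u ->
  sum_n_m (fun r => Kcoef ell kappa m n r *
      (INR (kappa - n) * u ^ pred (kappa - n) * ln u ^ (ell - m - r)
       + u ^ (kappa - n) * Derive (fun v => ln v ^ (ell - m - r)) u)) 0 (ell - m)
  = INR kappa * sum_n_m (fun r => Kcoef ell (kappa - 1) m n r
                           * u ^ (kappa - 1 - n) * ln u ^ (ell - m - r)) 0 (ell - m).
Proof.
  intros Hn Hu. set (k := (kappa - n)%nat).
  set (G := Gamma (INR kappa + 1) * Ecoef n m / INR (fact m)).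
  assert (Fm : 0 < INR (fact m)) by apply INR_fact_lt_0.
  assert (HG : Gamma (INR kappa + 1) = INR kappa * Gamma (INR (kappa - 1) + 1)).
  { assert (Hkappa : 1 <= INR kappa) by (apply (le_INR 1); lia).
    rewrite minus_INR by lia. simpl INR.
    replace (INR kappa + 1) with (INR kappa - 1 + 1 + 1) by ring.
    rewrite Gamma_succ by lra. f_equal. ring. }
  rewrite (sum_n_m_ext_loc_R _ (fun r => G * ((-1) ^ r / INR (fact (ell - m - r)) * Ccoef r k *
      (INR k * u ^ pred k * ln u ^ (ell - m - r) +
       u ^ k * (INR (ell - m - r) * / u * ln u ^ pred (ell - m - r)))))).
  2: { intros r _. rewrite Derive_ln_pow by exact Hu. unfold Kcoef, G. fold k.
       assert (0 < INR (fact (ell - m - r))) by apply INR_fact_lt_0. field. lra. }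
  rewrite <- sum_n_m_mult_l_R.
  rewrite (sum_n_m_ext_loc_R (fun r => INR kappa * (Kcoef ell (kappa - 1) m n r
                                  * u ^ (kappa - 1 - n) * ln u ^ (ell - m - r)))
    (fun r => G * ((-1) ^ r / INR (fact (ell - m - r)) *
      Ccoef r (k - 1) * u ^ (k - 1) * ln u ^ (ell - m - r)))).
  2: { intros r _. unfold Kcoef, G.
       replace (kappa - 1 - n)%nat with (k - 1)%nat by (unfold k; lia).
       rewrite HG. assert (0 < INR (fact (ell - m - r))) by apply INR_fact_lt_0.
       field. lra. }
  rewrite !sum_n_m_mult_l_R. f_equal.
  assert (Hk : (1 <= k)%nat) by (unfold k; lia).
  apply sum_deriv_pow_ln_pow_telescope; [exact Hk | lra | apply Ccoef_pred_0, Hk |].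
  intros r. apply Ccoef_pred_S, Hk.
Qed.

Lemma Ktilde_deriv_slice ell kappa m u : (1 <= kappa)%nat -> 0 < u ->
  sum_n_m (fun n => sum_n_m (fun r => Kcoef ell kappa m n r *
      (INR (kappa - n) * u ^ pred (kappa - n) * ln u ^ (ell - m - r)
       + u ^ (kappa - n) * Derive (fun v => ln v ^ (ell - m - r)) u)) 0 (ell - m)) m kappa
  = INR kappa * sum_n_m (fun n => sum_n_m (fun r => Kcoef ell (kappa - 1) m n r
                           * u ^ (kappa - 1 - n) * ln u ^ (ell - m - r)) 0 (ell - m)) m (kappa - 1)
    + sum_n_m (fun r => Kcoef ell kappa m kappa r * Derive (fun v => ln v ^ (ell - m - r)) u)
        0 (ell - m).
Proof.
  intros Hk Hu. destruct (le_lt_dec m kappa) as [Hmk|Hmk].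
  - rewrite sum_n_m_last_R by lia. f_equal.
    + rewrite <- sum_n_m_mult_l_R. apply sum_n_m_ext_loc_R. intros n Hn.
      apply Ktilde_deriv_term_lt; [lia | exact Hu].
    + apply sum_n_m_ext_loc_R. intros r _. rewrite Nat.sub_diag. simpl. ring.
  - rewrite !sum_n_m_zero_R by lia.
    rewrite sum_n_m_eq_0_R, Rmult_0_r, Rplus_0_r; [reflexivity|].
    intros r _. unfold Kcoef. rewrite Ecoef_lt by exact Hmk. ring.
Qed.

Lemma Ktilde_deriv_eq ell kappa u : (1 <= kappa)%nat -> 0 < u ->
  Ktilde_deriv ell u kappa = INR kappa * Ktilde ell u (kappa - 1)
    + sum_n_m (fun m => sum_n_m (fun r =>
        Kcoef ell kappa m kappa r * Derive (fun v => ln v ^ (ell - m - r)) u) 0 (ell - m)) 0 ell.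
Proof.
  intros Hk Hu. unfold Ktilde_deriv, Ktilde.
  rewrite <- sum_n_m_mult_l_R, <- sum_n_m_plus_R.
  apply sum_n_m_ext_loc_R. intros m _. apply Ktilde_deriv_slice; assumption.
Qed.

Theorem lemma3 (ell : nat) (hell : (1 <= ell)%nat) (kappa : nat) (hk : (1 <= kappa)%nat)
  (u : R) (hu : 1 < u) :
  is_derive (fun v => Ktilde ell v kappa) u
    (INR kappa * Ktilde ell u (kappa - 1)
     + sum_n_m (fun m =>
         sum_n_m (fun r =>
           (-1) ^ r * Gamma (INR kappa + 1) / (INR (fact m) * INR (fact (ell - m - r)))
           * Ecoef kappa m * Ccoef r 0 * Derive (fun v => ln v ^ (ell - m - r)) u)
         0 (ell - m))
       0 ell).
Proof.
  assert (Hu : 0 < u) by lra.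
  replace (sum_n_m _ 0 ell) with (sum_n_m (fun m => sum_n_m (fun r =>
      Kcoef ell kappa m kappa r * Derive (fun v => ln v ^ (ell - m - r)) u) 0 (ell - m)) 0 ell).
  - rewrite <- Ktilde_deriv_eq by assumption. apply is_derive_Ktilde, Hu.
  - apply sum_n_m_ext_loc_R. intros m _. apply sum_n_m_ext_loc_R. intros r _.
    unfold Kcoef. rewrite Nat.sub_diag. reflexivity.
Qed.
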